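(* Let $D$ be a delta-matroid on $E\cup\overline{E}$ for a finite set $E$. If $E=\emptyset$, then $U_D(u,v)=1$. For any $i\in E$, $$U_D(u,v)=\begin{cases}U_{D/i}(u,v)+U_{D\setminus i}(u,v)+u\,U_{D(i)}(u,v), & \text{if } i \text{ is neither a loop nor a coloop},\\ (u+v+1)\,U_{D\setminus i}(u,v), & \text{if } i \text{ is a loop or a coloop}.\end{cases}$$
   Context: For a finite $E\subseteq\{1,2,\dots\}$ let $E\cup\overline{E}$ consist of $E$ and formal copies $\overline{i}$ ($i\in E$), with involution $a\mapsto\overline{a}$; $\overline{S}=\{\overline{a}:a\in S\}$. A subset is admissible if it contains at most one of $i,\overline{i}$ for each $i$; $\operatorname{AdS}(E)$ denotes the set of admissible subsets of $E\cup\overline{E}$. In $\mathbb{R}^E$ set $e_{\overline{i}}=-e_i$, $e_S=\sum_{a\in S}e_a$. A delta-matroid on $E\cup\overline{E}$ is a nonempty collection $\mathcal{F}$ of admissible sets of size $|E|$ (feasible sets) such that $\operatorname{Conv}\{e_B:B\in\mathcal{F}\}$ has all edges parallel to some $e_i$ or $e_i\pm e_j$. Rank function: $g_D(S)=\max_{B\in\mathcal{F}}(|S\cap B|-|\overline{S}\cap B|)$. $U$-polynomial: $U_D(u,v)=\sum_{S\in\operatorname{AdS}(E)}u^{|E|-|S|}v^{(|S|-g_D(S))/2}$. For $i\in E$: $i$ is a loop if no feasible set contains $i$, a coloop if every feasible set contains $i$. If $i$ is not a loop, $D/i$ is the delta-matroid on $(E\setminus\{i\})\cup\overline{(E\setminus\{i\})}$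 with feasible sets $B\setminus\{i\}$ for feasible $B\ni i$; if $i$ is not a coloop, $D\setminus i$ has feasible sets $B\setminus\{\overline{i}\}$ for feasible $B\ni\overline{i}$; $D(i)$ has feasible sets $B\setminus\{i,\overline{i}\}$ for all feasible $B$; if $i$ is a loop or a coloop, $D/i=D\setminus i=D(i)$. *)

From HB Require Import structures.
From mathcomp Require Import all_boot all_order all_algebra.
From mathcomp Require Import finmap.
From Stdlib Require Import Rdefinitions.
From mathcomp Require Import Rstruct.

Set Implicit Arguments.
Unset Strict Implicit.
Unset Printing Implicit Defensive.

Import Order.TTheory GRing.Theory Num.Theory.
Local Open Scope fset_scope.
Local Open Scope ring_scope.

(* Elements of E ∪ Ē are encoded as pairs (i, b) : nat * bool :       *)
(*   (i, false) stands for i, and (i, true) stands for the copy ī.     *)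
Definition elt := (nat * bool)%type.

Definition bar (a : elt) : elt := (a.1, ~~ a.2).

Definition barS (S : {fset elt}) : {fset elt} := [fset bar a | a in S].

Definition ground (E : {fset nat}) : {fset elt} :=
  [fset (i, false) | i in E] `|` [fset (i, true) | i in E].

Definition admissible (E : {fset nat}) (S : {fset elt}) : bool :=
  (S `<=` ground E) && [forall x : S, bar (val x) \notin S].

Definition AdS (E : {fset nat}) : {fset {fset elt}} :=
  [fset S in fpowerset (ground E) | admissible E S].

(* Geometry in R^E (R = the real numbers).  Vectors are functions      *)
(* nat -> R (only coordinates in E matter); e_ī = - e_i.               *)
Definition unitv (i : nat) : nat -> R := fun l => if l == i then 1 else 0.

Definition vecS (S : {fset elt}) : nat -> R :=
  fun l => \sum_(a <- S | a.1 == l) (if a.2 then -1 else 1).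

Definition dotv (E : {fset nat}) (c : nat -> R) (S : {fset elt}) : R :=
  \sum_(l <- E) c l * vecS S l.

Definition parallel_ok (E : {fset nat}) (d : nat -> R) : Prop :=
  exists (k : R) (i j : nat), [/\ i \in E, j \in E &
    (forall l, d l = k * unitv i l) \/
    (i != j /\ forall l, d l = k * (unitv i l + unitv j l)) \/
    (i != j /\ forall l, d l = k * (unitv i l - unitv j l))].

(* Every edge of Conv{e_B : B in F} is parallel to some e_i or e_i ± e_j.
   An edge is a one-dimensional face: the set of points of the polytope
   maximising a linear functional c, when that set is a segment.  For
   two distinct vertices e_B1, e_B2 of such a face, the face is
   [e_B1, e_B2] and the edge direction is e_B2 - e_B1.                 *)
Definition edges_ok (E : {fset nat}) (F : {fset {fset elt}}) : Prop :=
  forall (c : nat -> R) (B1 B2 : {fset elt}),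
    B1 \in F -> B2 \in F -> B1 != B2 ->
    (forall B, B \in F -> dotv E c B <= dotv E c B1) ->
    dotv E c B2 = dotv E c B1 ->
    (forall B, B \in F -> dotv E c B = dotv E c B1 ->
       exists t : R, forall l, vecS B l - vecS B1 l = t * (vecS B2 l - vecS B1 l)) ->
    parallel_ok E (fun l => vecS B2 l - vecS B1 l).

Definition is_delta_matroid (E : {fset nat}) (F : {fset {fset elt}}) : Prop :=
  [/\ F != fset0,
      (forall B, B \in F -> admissible E B /\ #|` B| = #|` E|) &
      edges_ok E F].

(* g_D(S) = max_{B in F} (|S ∩ B| - |S̄ ∩ B|).  Every term is >= -|S|,
   so using -|S| as the neutral element of the max does not change the
   value when F is nonempty. *)
Definition rankD (F : {fset {fset elt}}) (S : {fset elt}) : int :=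
  \big[Num.max/ - Posz #|` S|]_(B <- F)
     (Posz #|` S `&` B| - Posz #|` barS S `&` B|).

(* bivariate integer polynomials: u is the inner variable, v the outer *)
Definition bipoly := {poly {poly int}}.
Definition uvar : bipoly := ('X)%:P.
Definition vvar : bipoly := 'X.

Definition Upoly (E : {fset nat}) (F : {fset {fset elt}}) : bipoly :=
  \sum_(S <- AdS E)
    uvar ^+ (subn #|` E| #|` S|) *
    vvar ^+ (divn (absz (Posz #|` S| - rankD F S)) 2).

Definition is_loop (F : {fset {fset elt}}) (i : nat) : bool :=
  [forall B : F, (i, false) \notin val B].
Definition is_coloop (F : {fset {fset elt}}) (i : nat) : bool :=
  [forall B : F, (i, false) \in val B].

Definition minor_mid (F : {fset {fset elt}}) (i : nat) : {fset {fset elt}} :=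
  [fset B `\` [fset (i, false); (i, true)] | B in F].

(* D/i (with the convention D/i = D(i) when i is a loop or coloop) *)
Definition contract (F : {fset {fset elt}}) (i : nat) : {fset {fset elt}} :=
  if is_loop F i || is_coloop F i then minor_mid F i
  else [fset B `\` [fset (i, false)] | B in [fset B in F | (i, false) \in B]].

(* D\i (with the convention D\i = D(i) when i is a loop or coloop) *)
Definition delete (F : {fset {fset elt}}) (i : nat) : {fset {fset elt}} :=
  if is_loop F i || is_coloop F i then minor_mid F i
  else [fset B `\` [fset (i, true)] | B in [fset B in F | (i, true) \in B]].

From Stdlib Require Import Rdefinitions.
From mathcomp Require Import all_boot all_order all_algebra.
From mathcomp Require Import finmap.
From mathcomp Require Import Rstruct.
From mathcomp Require Import zify ring.

Set Implicit Arguments.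
Unset Strict Implicit.
Unset Printing Implicit Defensive.

Import GRing.Theory Num.Theory Order.TTheory.
Local Open Scope fset_scope.
Local Open Scope ring_scope.

(* Write e_S in {-1, 0, 1}^E for the signed indicator vector of S, so that
   |S ∩ B| - |S̄ ∩ B| = <e_S, e_B> and g_D(S) is the largest <e_S, e_B> over
   feasible B.  The admissible sets of E are the S + i, S + ī and S with S
   admissible for E - i, which gives the three terms of the recursion once g_D
   is known on them: g_D(S) = g_{D(i)}(S), and g_D(S + a) = 1 + g_{D/a}(S) for
   a in {i, ī} as soon as some feasible set contains a (or ±1 + g_{D(i)}(S)
   when all feasible sets contain the same one of i, ī).
   The delta-matroid axiom enters only through an exchange property: if some
   feasible set contains a, every feasible B0 not containing a has a feasible
   partner B containing a that differs from B0 in at most one other coordinate.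
   Taking for B the feasible set containing a closest to B0, one builds a
   linear functional maximised over the feasible sets exactly at B0 and B, so
   e_B - e_B0 is an edge direction of the polytope. *)

Lemma sum_if_eq_seq (V : nmodType) (T : eqType) (s : seq T) (q : T) (g : T -> V) :
  uniq s -> \sum_(x <- s) (if x == q then g x else 0) = if q \in s then g q else 0.
Proof.
elim: s => [|a s IH] /=; first by rewrite big_nil.
move=> /andP[as_ us]; rewrite big_cons IH // in_cons.
by case: eqVneq => [<-|_] /=; rewrite ?(negbTE as_) ?addr0 ?add0r.
Qed.

Lemma card_fset_sumz (T : choiceType) (A : {fset T}) : #|` A|%:Z = \sum_(a <- A) 1.
Proof. by rewrite card_fset_sum1 -natz natr_sum. Qed.

Lemma in_fset_cond (T : choiceType) (A : {fset T}) (P : pred T) x :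
  (x \in [fset y in A | P y]) = (x \in A) && P x.
Proof. by rewrite !inE. Qed.

Lemma seq_argmax d (T : orderType d) (I : eqType) (r : seq I) (P : pred I)
    (f : I -> T) i0 : i0 \in r -> P i0 ->
  exists2 i, (i \in r) && P i & forall j, j \in r -> P j -> (f j <= f i)%O.
Proof.
move=> i0r Pi0; have : has P r by apply/hasP; exists i0.
elim: r {i0r} => // a r IH /=.
have [/IH[k /andP[kr Pk] kmax] _|noP Pa] := boolP (has P r).
  have [/andP[Pa fka]|aNmax] := boolP (P a && (f k <= f a)%O).
    exists a; rewrite ?mem_head ?Pa // => j /predU1P[-> //|jr Pj].
    exact: le_trans (kmax j jr Pj) fka.
  exists k; rewrite ?in_cons ?kr ?orbT ?Pk // => j /predU1P[-> Pj|]; last exact: kmax.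
  by move: aNmax; rewrite Pj /= -ltNge => /ltW.
rewrite orbF in Pa.
exists a; rewrite ?mem_head ?Pa // => j /predU1P[-> //|jr Pj].
by case/hasP: noP; exists j.
Qed.

Lemma weighted_lex_lt (n a a' b b' : int) : - n <= b <= n -> - n <= b' <= n ->
  (a + 2 <= a') || (a <= a') && (b < b') -> (n + 1) * a + b < (n + 1) * a' + b'.
Proof. nia. Qed.

(** * Admissible sets *)

Lemma in_ground E l b : ((l, b) \in ground E) = (l \in E).
Proof.
apply/fsetUP/idP => [[] /imfsetP[m /= mE [-> _]] //|lE].
by case: b; [right|left]; apply/imfsetP; exists l.
Qed.

Lemma sum_fst_eq (V : nmodType) (A : {fset elt}) (l : nat) (g : elt -> V) :
  \sum_(a <- A | a.1 == l) g a =
  (if (l, false) \in A then g (l, false) else 0) +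
  (if (l, true) \in A then g (l, true) else 0).
Proof.
rewrite big_mkcond -!sum_if_eq_seq ?fset_uniq // -big_split /=.
apply: eq_bigr => -[m [|]] _ /=; rewrite !xpair_eqE /=;
  by case: (m == l); rewrite ?addr0 ?add0r.
Qed.

Lemma sum_ground (V : nmodType) E S (g : elt -> V) : S `<=` ground E ->
  \sum_(a <- S) g a = \sum_(l <- E)
    ((if (l, false) \in S then g (l, false) else 0) +
     (if (l, true) \in S then g (l, true) else 0)).
Proof.
move=> /fsubsetP SE; rewrite (partition_big_imfset _ fst).
under eq_bigr do rewrite sum_fst_eq.
apply: big_fset_incl => [|l _ lS].
  by apply/fsubsetP => _ /imfsetP[[l b] /SE + ->]; rewrite in_ground.
have notin b : (l, b) \in S = false.
  by apply/negbTE; apply: contra lS => lbS; apply/imfsetP; exists (l, b).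
by rewrite !notin addr0.
Qed.

Lemma card_ground E S : S `<=` ground E ->
  #|` S|%:Z = \sum_(l <- E) (((l, false) \in S)%:Z + ((l, true) \in S)%:Z).
Proof.
move=> SE; rewrite card_fset_sumz (sum_ground _ SE); apply: eq_bigr => l _.
by case: ((l, false) \in S); case: ((l, true) \in S).
Qed.

Lemma admP E S : reflect
  (S `<=` ground E /\ forall l, ~~ (((l, false) \in S) && ((l, true) \in S)))
  (admissible E S).
Proof.
apply: (iffP andP) => -[SE adm]; split => //.
  move=> l; apply/negP => /andP[lf lt].
  by have := forallP adm [` lf]; rewrite /= /bar lt.
apply/forallP => -[[l b] lbS] /=; rewrite /bar /=.
by apply: contra (adm l) => lbS'; case: b lbS lbS' => /= -> ->.
Qed.

Lemma card_adm E S : admissible E S ->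
  #|` E|%:Z = #|` S|%:Z + \sum_(l <- E) (((l, false) \notin S) && ((l, true) \notin S))%:Z.
Proof.
case/admP => SE adm; rewrite card_fset_sumz (card_ground SE) -big_split /=.
apply: eq_bigr => l _; move: (adm l).
by case: ((l, false) \in S); case: ((l, true) \in S).
Qed.

Lemma card_adm_le E S : admissible E S -> (#|` S| <= #|` E|)%N.
Proof. by move=> /card_adm; rewrite -lez_nat => ->; rewrite lerDl sumr_ge0. Qed.

Lemma adm_full_cover E S : admissible E S -> #|` S| = #|` E| ->
  forall l, l \in E -> ((l, false) \in S) || ((l, true) \in S).
Proof.
move=> /card_adm + SE; rewrite SE => /eqP; rewrite -subr_eq0 opprD addNKr.
rewrite oppr_eq0 psumr_eq0 // => /allP cov l lE.
by move: (cov l lE); case: ((l, false) \in S); case: ((l, true) \in S).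
Qed.

Lemma adm_sub E S T : T `<=` S -> admissible E S -> admissible E T.
Proof.
move=> TS /admP[SE adm]; apply/admP; split; first exact: fsubset_trans TS SE.
by move=> l; apply: contra (adm l) => /andP[/(fsubsetP TS) -> /(fsubsetP TS) ->].
Qed.

Lemma notin_groundD1 E i b S : S `<=` ground (E `\ i) -> (i, b) \notin S.
Proof.
by move=> /fsubsetP SE; apply/negP => /SE; rewrite in_ground !inE eqxx.
Qed.

Lemma fsetU1_ground E i b S : i \in E -> S `<=` ground (E `\ i) ->
  (i, b) |` S `<=` ground E.
Proof.
move=> iE /fsubsetP SE; rewrite fsubUset fsub1set in_ground iE /=.
by apply/fsubsetP => -[l c] /SE; rewrite !in_ground inE => /andP[].
Qed.

Lemma adm_fsetD1 E i S : i \in E ->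
  admissible (E `\ i) S = [&& admissible E S, (i, false) \notin S & (i, true) \notin S].
Proof.
move=> iE; apply/idP/and3P => [/admP[SEi adm]|[/admP[/fsubsetP SE adm] ifS itS]].
  split; rewrite ?(notin_groundD1 _ SEi) //; apply/admP; split => //.
  apply/fsubsetP => a /(fsubsetP SEi); case: a => l b; rewrite !in_ground inE.
  by case/andP.
apply/admP; split => //; apply/fsubsetP => -[l b] lbS.
rewrite in_ground inE -(in_ground E l b) SE // andbT inE.
by apply: contraTneq lbS => ->; case: b.
Qed.

Lemma adm_fsetU1 E i b S : i \in E -> admissible (E `\ i) S -> admissible E ((i, b) |` S).
Proof.
move=> iE; rewrite adm_fsetD1 // => /and3P[/admP[SE adm] ifS itS].
apply/admP; split; first by rewrite fsubUset fsub1set in_ground iE.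
move=> l; rewrite !inE !xpair_eqE; case: (eqVneq l i) => [->|_] //=.
by rewrite (negbTE ifS) (negbTE itS); case: b.
Qed.

Lemma inAdS E S : (S \in AdS E) = admissible E S.
Proof. by rewrite !inE /= fpowersetE andb_idl // => /andP[]. Qed.

Lemma mem_AdS_fsetU1 E i b S : i \in E ->
  (S \in [fset (i, b) |` S' | S' in AdS (E `\ i)]) = admissible E S && ((i, b) \in S).
Proof.
move=> iE; apply/imfsetP/andP => [[S' S'A ->]|[SA iS]].
  by rewrite adm_fsetU1 -?inAdS // fsetU11.
exists (S `\ (i, b)); last by rewrite fsetD1K.
rewrite inAdS adm_fsetD1 // (adm_sub (fsubD1set _ _) SA) !in_fsetD1 /=.
case/admP: SA => _ /(_ i); move: iS; rewrite !xpair_eqE eqxx /=.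
by case: b; case: ((i, false) \in S); case: ((i, true) \in S).
Qed.

Lemma AdS_split (V : nmodType) E i (t : {fset elt} -> V) : i \in E ->
  \sum_(S <- AdS E) t S =
  \sum_(S <- AdS (E `\ i)) (t ((i, false) |` S) + t ((i, true) |` S) + t S).
Proof.
move=> iE; have ext_inj b : {in AdS (E `\ i) &, injective (fun S => (i, b) |` S)}.
  move=> S1 S2; rewrite !inAdS => /admP[S1E _] /admP[S2E _] eq12.
  by rewrite -(fsetU1K (notin_groundD1 b S1E)) eq12 fsetU1K // (notin_groundD1 b S2E).
rewrite !big_split /= (big_fsetID _ (fun S : {fset elt} => (i, false) \in S)) /=.
rewrite [X in _ + X](big_fsetID _ (fun S : {fset elt} => (i, true) \in S)) /= addrA.
congr (_ + _ + _).
- rewrite (@eq_fbigl _ _ _ _ _ [fset (i, false) |` S | S in AdS (E `\ i)]) ?big_imfset //.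
  by move=> S; rewrite mem_AdS_fsetU1 // in_fset_cond inAdS.
- rewrite (@eq_fbigl _ _ _ _ _ [fset (i, true) |` S | S in AdS (E `\ i)]) ?big_imfset //.
  move=> S; rewrite mem_AdS_fsetU1 // in_fset_cond (in_fset_cond (AdS E)) inAdS.
  case: (boolP (admissible E S)) => //= /admP[_ /(_ i)].
  by case: ((i, false) \in S); case: ((i, true) \in S).
- apply: eq_fbigl => S; rewrite in_fset_cond (in_fset_cond (AdS E)) !inAdS.
  by rewrite adm_fsetD1 // andbA.
Qed.

Lemma AdS_fset0 : AdS fset0 = [fset fset0].
Proof.
apply/fsetP => S; rewrite inAdS inE; apply/admP/eqP => [[S0 _]|->].
  apply/eqP; rewrite -fsubset0; apply: fsubset_trans S0 _.
  by apply/fsubsetP => -[l b]; rewrite in_ground inE.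
by split; rewrite ?fsub0set.
Qed.

(** * Signed vectors and the rank function *)

Definition zvec (B : {fset elt}) (l : nat) : int :=
  ((l, false) \in B)%:Z - ((l, true) \in B)%:Z.

Definition zdot (E : {fset nat}) (c : nat -> int) (B : {fset elt}) : int :=
  \sum_(l <- E) c l * zvec B l.

Lemma vecS_zvec B l : vecS B l = (zvec B l)%:~R.
Proof.
rewrite /vecS sum_fst_eq /zvec.
by case: ((l, false) \in B); case: ((l, true) \in B);
  rewrite ?addr0 ?add0r ?subr0 ?sub0r ?subrr ?intrN.
Qed.

Lemma dotv_zdot E (c : nat -> int) B :
  dotv E (fun l => (c l)%:~R) B = (zdot E c B)%:~R.
Proof.
by rewrite /dotv /zdot rmorph_sum; apply: eq_bigr => l _; rewrite vecS_zvec rmorphM.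
Qed.

Lemma zvec_bound B l : -1 <= zvec B l <= 1.
Proof. by rewrite /zvec; case: ((l, false) \in B); case: ((l, true) \in B). Qed.

Lemma zdot_scaleD E k c1 c2 B :
  zdot E (fun l => k * c1 l + c2 l) B = k * zdot E c1 B + zdot E c2 B.
Proof.
by rewrite /zdot mulr_sumr -big_split; apply: eq_bigr => l _; rewrite mulrDl mulrA.
Qed.

Lemma zdot_delta E i mu B : i \in E ->
  zdot E (fun l => if l == i then mu else 0) B = mu * zvec B i.
Proof.
move=> iE; rewrite /zdot (eq_bigr (fun l => if l == i then mu * zvec B l else 0)).
  by rewrite sum_if_eq_seq ?fset_uniq ?iE.
by move=> l _; case: eqP; rewrite ?mul0r.
Qed.

Lemma zdot_near E c B B' q : (forall l, -1 <= c l <= 1) ->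
  (forall l, l \in E -> l != q -> zvec B' l = zvec B l) ->
  zdot E c B - 2 <= zdot E c B'.
Proof.
move=> cb agree; have same A : A `<=` E `\ q -> zdot A c B' = zdot A c B.
  move=> /fsubsetP AE; rewrite /zdot big_seq [RHS]big_seq; apply: eq_bigr => l /AE.
  by rewrite in_fsetD1 => /andP[lq lE]; rewrite agree.
have [qE|qNE] := boolP (q \in E); last first.
  by rewrite (same E) ?mem_fsetD1 // lerBlDr lerDl.
rewrite /zdot !(big_fsetD1 q qE) /= -!/(zdot _ c _) same //.
have := cb q; have := zvec_bound B q; have := zvec_bound B' q; nia.
Qed.

Lemma zdot_fsetD E c B X : (forall a, a \in X -> a.1 \notin E) ->
  zdot E c (B `\` X) = zdot E c B.
Proof.
move=> XNE; rewrite /zdot big_seq [RHS]big_seq; apply: eq_bigr => l lE.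
have notin b : (l, b) \in X = false by apply: contraTF lE => /XNE.
by rewrite /zvec !in_fsetD !notin.
Qed.

Lemma zvec_fsetU1_neq i b S l : l != i -> zvec ((i, b) |` S) l = zvec S l.
Proof. by move=> li; rewrite /zvec !inE !xpair_eqE (negbTE li). Qed.

Lemma zvec_fsetU1 E i b S : S `<=` ground (E `\ i) -> zvec ((i, b) |` S) i = (-1) ^+ b.
Proof.
move=> SE; rewrite /zvec !inE !xpair_eqE eqxx.
by rewrite !(negbTE (notin_groundD1 _ SE)); case: b.
Qed.

Lemma zdot_zvec_bound E S B : S `<=` ground E ->
  - #|` S|%:Z <= zdot E (zvec S) B <= #|` S|%:Z.
Proof.
move=> SE; rewrite (card_ground SE) -sumrN /zdot.
apply/andP; split; apply: ler_sum => l _; rewrite /zvec;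
  by case: ((l, false) \in S); case: ((l, true) \in S);
     case: ((l, false) \in B); case: ((l, true) \in B).
Qed.

Lemma in_barS S l b : ((l, b) \in barS S) = ((l, ~~ b) \in S).
Proof.
have -> : (l, b) = bar (l, ~~ b) by rewrite /bar /= negbK.
by rewrite mem_imfset // => -[x1 x2] [y1 y2] [-> /negb_inj ->].
Qed.

Lemma rank_termE E S B : S `<=` ground E ->
  #|` S `&` B|%:Z - #|` barS S `&` B|%:Z = zdot E (zvec S) B.
Proof.
move=> SE; have barSE : barS S `<=` ground E.
  apply/fsubsetP => -[l b]; rewrite in_barS in_ground -(in_ground E l (~~ b)).
  exact: (fsubsetP SE).
rewrite (@card_ground E) ?(fsubset_trans (fsubsetIl _ _) SE) //.
rewrite (@card_ground E) ?(fsubset_trans (fsubsetIl _ _) barSE) // -sumrB.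
apply: eq_bigr => l _; rewrite /zvec !in_fsetI !in_barS /=.
by case: ((l, false) \in S); case: ((l, true) \in S);
   case: ((l, false) \in B); case: ((l, true) \in B).
Qed.

Section Rank.
Variables (E : {fset nat}) (F : {fset {fset elt}}) (S : {fset elt}).
Hypothesis SE : S `<=` ground E.

Lemma rankDE :
  rankD F S = \big[Num.max/ - #|` S|%:Z]_(B <- F) zdot E (zvec S) B.
Proof. by apply: eq_bigr => B _; exact: rank_termE. Qed.

Lemma rankD_ge B : B \in F -> zdot E (zvec S) B <= rankD F S.
Proof. by move=> BF; rewrite rankDE; exact: le_bigmax_seq. Qed.

Lemma rankD_le_card : rankD F S <= #|` S|%:Z.
Proof.
rewrite rankDE; apply: bigmax_le => [|B _]; first lia.
by case/andP: (zdot_zvec_bound B SE).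
Qed.

Lemma rankD_eq m : (exists2 B, B \in F & zdot E (zvec S) B = m) ->
  (forall B, B \in F -> zdot E (zvec S) B <= m) -> rankD F S = m.
Proof.
move=> [B0 B0F <-] ub; apply/le_anti; rewrite rankD_ge // andbT rankDE big_seq.
by apply: bigmax_le => //; case/andP: (zdot_zvec_bound B0 SE).
Qed.

Lemma rankD_attained : F != fset0 -> exists2 B, B \in F & rankD F S = zdot E (zvec S) B.
Proof.
case/fset0Pn => B0 B0F.
have [B /andP[BF _] Bmax] := seq_argmax (P := xpredT) (zdot E (zvec S)) B0F erefl.
by exists B => //; apply: rankD_eq => [|B' B'F]; [exists B | exact: Bmax].
Qed.

End Rank.

Lemma rankD_shift E0 E1 F G S S' (d : int) :
  S `<=` ground E0 -> S' `<=` ground E1 -> G != fset0 ->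
  (forall B, B \in F -> exists2 B', B' \in G &
     zdot E0 (zvec S) B <= d + zdot E1 (zvec S') B') ->
  (forall B', B' \in G -> exists2 B, B \in F &
     zdot E0 (zvec S) B = d + zdot E1 (zvec S') B') ->
  rankD F S = d + rankD G S'.
Proof.
move=> SE0 SE1 /(rankD_attained SE1)[B' B'G rankG] le_shift eq_shift.
apply: (rankD_eq SE0) => [|B BF].
  by have [B BF eqB] := eq_shift B' B'G; exists B; rewrite // eqB rankG.
have [B'' B''G le''] := le_shift B BF.
by rewrite (le_trans le'') // lerD2l rankD_ge.
Qed.

(** * The exchange property of delta-matroids *)

Section Exchange.
Variables (E : {fset nat}) (F : {fset {fset elt}}).
Hypothesis dmF : is_delta_matroid E F.

Lemma feas_adm B : B \in F -> admissible E B.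
Proof. by case: dmF => _ feas _ /feas[]. Qed.

Lemma feas_card B : B \in F -> #|` B| = #|` E|.
Proof. by case: dmF => _ feas _ /feas[]. Qed.

Lemma feas_memE B l b : B \in F -> l \in E -> ((l, b) \in B) = (zvec B l == (-1) ^+ b).
Proof.
move=> BF lE; have := adm_full_cover (feas_adm BF) (feas_card BF) lE.
case/admP: (feas_adm BF) => _ /(_ l); rewrite /zvec.
by case: b; case: ((l, false) \in B); case: ((l, true) \in B).
Qed.

Lemma feas_zvec B l : B \in F -> l \in E -> zvec B l = 1 \/ zvec B l = -1.
Proof.
move=> BF lE; have := feas_memE false BF lE; have := feas_memE true BF lE.
have := adm_full_cover (feas_adm BF) (feas_card BF) lE.
by case: ((l, false) \in B) => [_ _ /esym/eqP|/= -> /esym/eqP]; [left|right].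
Qed.

Lemma feas_memN B l b : B \in F -> l \in E -> ((l, ~~ b) \in B) = ((l, b) \notin B).
Proof. by move=> BF lE; rewrite !feas_memE //; case: (feas_zvec BF lE) => ->; case: b. Qed.

Lemma feas_inj B C : B \in F -> C \in F -> {in E, zvec B =1 zvec C} -> B = C.
Proof.
move=> BF CF eqBC; apply/fsetP => -[l b].
have [lE|lNE] := boolP (l \in E); first by rewrite !feas_memE ?eqBC.
have notin A : A \in F -> (l, b) \in A = false.
  move=> /feas_adm/admP[/fsubsetP AE _]; apply: contraNF lNE => /AE.
  by rewrite in_ground.
by rewrite !notin.
Qed.

Lemma zdot_feas_self B : B \in F -> zdot E (zvec B) B = #|` E|%:Z.
Proof.
move=> BF; rewrite card_fset_sumz /zdot big_seq [RHS]big_seq.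
by apply: eq_bigr => l lE; case: (feas_zvec BF lE) => ->.
Qed.

Lemma zdot_feas_neq B C : B \in F -> C \in F -> B != C ->
  zdot E (zvec C) B <= #|` E|%:Z - 2.
Proof.
move=> BF CF neBC; have [l lE neq] : exists2 l, l \in E & zvec C l != zvec B l.
  apply/hasP; apply: contraNT neBC => /hasPn agree; apply/eqP/feas_inj => // l lE.
  by apply/esym/eqP; exact: negPn (agree l lE).
rewrite card_fset_sumz /zdot !(big_fsetD1 l lE) /=.
have -> : zvec C l * zvec B l = -1.
  by case: (feas_zvec CF lE) (feas_zvec BF lE) neq => -> [] ->.
have : \sum_(k <- E `\ l) zvec C k * zvec B k <= \sum_(k <- E `\ l) 1.
  by apply: ler_sum => k _; have := zvec_bound C k; have := zvec_bound B k; nia.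
by rewrite addrAC (_ : 1 - 2 = -1) // lerD2l.
Qed.

Lemma zdot_feas_bound C B : C \in F -> - #|` E|%:Z <= zdot E (zvec C) B <= #|` E|%:Z.
Proof.
move=> CF; rewrite -(feas_card CF); apply: zdot_zvec_bound.
by case/admP: (feas_adm CF).
Qed.

(* The face of Conv{e_B : B in F} on which w is maximal is the segment [e_B0, e_B1]. *)
Definition max_face_pair (w : nat -> int) (B0 B1 : {fset elt}) : Prop :=
  [/\ forall B, B \in F -> zdot E w B <= zdot E w B0,
      zdot E w B1 = zdot E w B0 &
      forall B, B \in F -> zdot E w B = zdot E w B0 -> B = B0 \/ B = B1].

Lemma max_face_pair_near w B0 B1 : B0 \in F -> B1 \in F -> B0 != B1 ->
  max_face_pair w B0 B1 -> exists i j, forall l, l != i -> l != j -> zvec B1 l = zvec B0 l.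
Proof.
move=> B0F B1F neq [wmax weq wface]; have [_ _ edges] := dmF.
have [k [i [j [_ _ dir]]]] : parallel_ok E (fun l => vecS B1 l - vecS B0 l).
  apply: (edges (fun l => (w l)%:~R)) => // [B BF||B BF]; rewrite ?dotv_zdot.
  - by rewrite ler_int wmax.
  - by rewrite weq.
  move=> /eqP; rewrite eqr_int => /eqP /(wface B BF) [->|->].
    by exists 0 => l; rewrite subrr mul0r.
  by exists 1 => l; rewrite mul1r.
exists i, j => l li lj; apply/eqP; rewrite -subr_eq0 -(eqr_int R) rmorphB /= -!vecS_zvec.
by case: dir => [d|[[_ d]|[_ d]]];
  rewrite d /unitv (negbTE li) ?(negbTE lj) ?addr0 ?subr0 mulr0.
Qed.

Lemma max_face_pair_join i c B0 B1 : i \in E -> B0 \in F -> B1 \in F ->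
  zvec B0 i = - zvec B1 i ->
  (forall B, B \in F -> zvec B i = zvec B0 i -> B != B0 -> zdot E c B < zdot E c B0) ->
  (forall B, B \in F -> zvec B i = zvec B1 i -> B != B1 -> zdot E c B < zdot E c B1) ->
  exists w, max_face_pair w B0 B1.
Proof.
move=> iE B0F B1F opp max0 max1.
(* w = 2c + d on the feasible sets agreeing with B1 at i and 2c - d on the others:
   the shift d evens out the two maxima. *)
set t := zvec B1 i; set d := zdot E c B0 - zdot E c B1.
pose w l := 2 * c l + (if l == i then t * d else 0); exists w.
have tt : t * t = 1 by rewrite /t; case: (feas_zvec B1F iE) => ->.
have wE B : B \in F -> (zvec B i = t /\ zdot E w B = 2 * zdot E c B + d) \/
                      (zvec B i = - t /\ zdot E w B = 2 * zdot E c B - d).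
  move=> BF; rewrite /w zdot_scaleD zdot_delta //.
  have [->|->] : zvec B i = t \/ zvec B i = - t.
    by rewrite /t; case: (feas_zvec BF iE) (feas_zvec B1F iE) => -> [] ->;
      rewrite ?opprK; auto.
  - by left; rewrite mulrAC tt mul1r.
  - by right; rewrite mulrN mulrAC tt mul1r.
have w0 : zdot E w B0 = zdot E c B0 + zdot E c B1.
  case: (wE B0 B0F) => -[B0i ->]; last by rewrite /d; lia.
  by move: tt; rewrite opp in B0i; nia.
split.
- move=> B BF; case: (wE B BF) => -[Bi ->]; rewrite w0 /d.
    by case: (eqVneq B B1) => [->|/(max1 B BF Bi) lt1]; lia.
  rewrite -opp in Bi.
  by case: (eqVneq B B0) => [->|/(max0 B BF Bi) lt0]; lia.
- case: (wE B1 B1F) => -[B1i ->]; first by rewrite w0 /d; lia.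
  by move: tt B1i; rewrite /t; nia.
move=> B BF; case: (wE B BF) => -[Bi ->]; rewrite w0 /d => eqw.
  by right; apply/eqP/negPn/negP => /(max1 B BF Bi) lt1; lia.
rewrite -opp in Bi.
by left; apply/eqP/negPn/negP => /(max0 B BF Bi) lt0; lia.
Qed.

Lemma feas_exchange i b B0 : i \in E -> B0 \in F -> (i, ~~ b) \in B0 ->
  (exists2 B1, B1 \in F & (i, b) \in B1) ->
  exists2 B, B \in F & (i, b) \in B /\
    exists q, forall l, l != i -> l != q -> zvec B l = zvec B0 l.
Proof.
move=> iE B0F ib0 [B1 B1F ib1].
have [Bp /andP[BpF ibp] Bpmax] :=
  seq_argmax (P := fun B : {fset elt} => (i, b) \in B) (zdot E (zvec B0)) B1F ib1.
have Bpi : zvec Bp i = (-1) ^+ b by apply/eqP; rewrite -feas_memE.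
have opp : zvec B0 i = - zvec Bp i by apply/eqP; rewrite Bpi -signrN -feas_memE.
have ne_i : zvec Bp i != zvec B0 i by rewrite opp; case: (feas_zvec BpF iE) => ->.
(* Among feasible sets containing (i, b), resp. (i, ~~ b), the weight below is
   maximal exactly at Bp, resp. B0: its first term measures closeness to B0 and
   its second breaks ties. *)
have [w face] : exists w, max_face_pair w B0 Bp.
  apply: (@max_face_pair_join i (fun l => (#|` E|%:Z + 1) * zvec B0 l + zvec Bp l) B0 Bp
    iE B0F BpF opp) => B BF Bi neB; rewrite !zdot_scaleD.
    apply: weighted_lex_lt; rewrite ?zdot_feas_bound //.
    by rewrite zdot_feas_self // -lerBrDr (zdot_feas_neq BF B0F neB).
  apply: weighted_lex_lt; rewrite ?zdot_feas_bound //; apply/orP; right.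
  rewrite zdot_feas_self // Bpmax ?feas_memE ?Bi ?Bpi //=.
  by rewrite (le_lt_trans (zdot_feas_neq BF BpF neB)) // gtrBl.
have [j [k near]] : exists j k, forall l, l != j -> l != k -> zvec Bp l = zvec B0 l.
  by apply: max_face_pair_near face => //; apply: contraNneq ne_i => ->.
exists Bp => //; split => //.
have ijk : (i == j) || (i == k).
  by apply: contraNT ne_i; rewrite negb_or => /andP[ij ik]; apply/eqP/near.
exists (if i == j then k else j) => l li.
by case: ifP ijk => [/eqP ij _|_ /= /eqP ik] lq; apply: near; rewrite // -?ij -?ik.
Qed.

End Exchange.

(** * Ranks in minors *)

(* D/i and D\i are [minor_at F (i, false)] and [minor_at F (i, true)]. *)
Definition minor_at (F : {fset {fset elt}}) (a : elt) : {fset {fset elt}} :=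
  [fset B `\` [fset a] | B in [fset B in F | a \in B]].

Section Minors.
Variables (E : {fset nat}) (F : {fset {fset elt}}) (i : nat).
Hypotheses (dmF : is_delta_matroid E F) (iE : i \in E).

Lemma zdot_fsetU1 b S B : S `<=` ground (E `\ i) ->
  zdot E (zvec ((i, b) |` S)) B = (-1) ^+ b * zvec B i + zdot (E `\ i) (zvec S) B.
Proof.
move=> SE; rewrite /zdot (big_fsetD1 i iE) /= (zvec_fsetU1 _ SE); congr (_ + _).
rewrite big_seq [RHS]big_seq; apply: eq_bigr => l.
by rewrite in_fsetD1 => /andP[li _]; rewrite zvec_fsetU1_neq.
Qed.

Lemma zdot_fsetD_i S B X : (forall a, a \in X -> a.1 = i) ->
  zdot (E `\ i) (zvec S) (B `\` X) = zdot (E `\ i) (zvec S) B.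
Proof. by move=> Xi; apply: zdot_fsetD => a /Xi ->; rewrite !inE eqxx. Qed.

Lemma feas_sign B (b c : bool) : B \in F -> (i, c) \in B ->
  (-1) ^+ b * zvec B i = (-1) ^+ (b (+) c).
Proof. by move=> BF; rewrite (feas_memE dmF) // => /eqP ->; rewrite signr_addb. Qed.

Lemma rankD_nonloop b S : S `<=` ground (E `\ i) ->
  (exists2 B1, B1 \in F & (i, b) \in B1) ->
  rankD F ((i, b) |` S) = 1 + rankD (minor_at F (i, b)) S.
Proof.
move=> SE [B1 B1F ib1].
have minorP B : B \in F -> (i, b) \in B -> B `\` [fset (i, b)] \in minor_at F (i, b).
  by move=> BF iB; apply/imfsetP; exists B; rewrite // !inE BF.
have drop B : zdot (E `\ i) (zvec S) (B `\` [fset (i, b)]) = zdot (E `\ i) (zvec S) B.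
  by apply: zdot_fsetD_i => a; rewrite inE => /eqP ->.
apply: (rankD_shift (fsetU1_ground _ iE SE) SE).
- by apply/fset0Pn; exists (B1 `\` [fset (i, b)]); exact: minorP.
- move=> B BF; rewrite zdot_fsetU1 //.
  have [iB|iNB] := boolP ((i, b) \in B).
    by exists (B `\` [fset (i, b)]); rewrite ?minorP // drop (feas_sign _ BF iB) addbb.
  have iB : (i, ~~ b) \in B by rewrite (feas_memN dmF _ BF iE).
  have [Bp [BpF [iBp [q near]]]] := feas_exchange dmF iE BF iB (ex_intro2 _ _ B1 B1F ib1).
  exists (Bp `\` [fset (i, b)]); rewrite ?minorP // drop (feas_sign _ BF iB) addbN addbb.
  have agree l : l \in E `\ i -> l != q -> zvec Bp l = zvec B l.
    by rewrite in_fsetD1 => /andP[li _]; exact: near.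
  have := zdot_near (zvec_bound S) agree; rewrite /= expr1 lerBlDl => le2.
  by rewrite addrC lerBlDl addrA.
- move=> _ /imfsetP[B /[!inE] /andP[BF iB] ->]; exists B => //.
  by rewrite zdot_fsetU1 // drop (feas_sign _ BF iB) addbb.
Qed.

Lemma minor_mid_neq0 : minor_mid F i != fset0.
Proof.
case: dmF => /fset0Pn[B BF] _ _; apply/fset0Pn.
by exists (B `\` [fset (i, false); (i, true)]); apply/imfsetP; exists B.
Qed.

Lemma zdot_fsetD_mid S B : zdot (E `\ i) (zvec S) (B `\` [fset (i, false); (i, true)]) =
  zdot (E `\ i) (zvec S) B.
Proof. by apply: zdot_fsetD_i => a; rewrite !inE => /orP[] /eqP ->. Qed.

Lemma rankD_mid S : S `<=` ground (E `\ i) -> rankD F S = rankD (minor_mid F i) S.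
Proof.
move=> SE; rewrite -[RHS]add0r.
apply: (rankD_shift SE SE minor_mid_neq0) => [B BF|_ /imfsetP[B BF ->]].
  exists (B `\` [fset (i, false); (i, true)]); last by rewrite zdot_fsetD_mid add0r.
  by apply/imfsetP; exists B.
by exists B; rewrite ?zdot_fsetD_mid ?add0r.
Qed.

Lemma rankD_fixed b t S : S `<=` ground (E `\ i) -> (forall B, B \in F -> (i, t) \in B) ->
  rankD F ((i, b) |` S) = (-1) ^+ (b (+) t) + rankD (minor_mid F i) S.
Proof.
move=> SE iF; apply: (rankD_shift (fsetU1_ground _ iE SE) SE minor_mid_neq0).
  move=> B BF; exists (B `\` [fset (i, false); (i, true)]).
    by apply/imfsetP; exists B.
  by rewrite zdot_fsetU1 // zdot_fsetD_mid (feas_sign _ BF (iF B BF)).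
move=> _ /imfsetP[B BF ->]; exists B => //.
by rewrite zdot_fsetU1 // zdot_fsetD_mid (feas_sign _ BF (iF B BF)).
Qed.

End Minors.

(** * The recursion *)

Definition Uterm (n m : nat) (r : int) : bipoly :=
  uvar ^+ (n - m) * vvar ^+ (absz (m%:Z - r) %/ 2).

Lemma UpolyE E F : Upoly E F = \sum_(S <- AdS E) Uterm #|` E| #|` S| (rankD F S).
Proof. by []. Qed.

Lemma Uterm_succ n m r : Uterm n.+1 m.+1 (1 + r) = Uterm n m r.
Proof. by rewrite /Uterm subSS intS opprD addrACA subrr add0r. Qed.

Lemma Uterm_succ_neg n m r : r <= m%:Z -> Uterm n.+1 m.+1 (-1 + r) = vvar * Uterm n m r.
Proof.
rewrite -subr_ge0 => rm; rewrite /Uterm subSS mulrCA -exprS.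
have [k km] : exists k : nat, m%:Z - r = k%:Z by exists (absz (m%:Z - r)); rewrite gez0_abs.
have -> : m.+1%:Z - (-1 + r) = (k + 2)%N%:Z by rewrite PoszD -km intS; ring.
by rewrite km /=; congr (_ * vvar ^+ _); lia.
Qed.

Lemma Uterm_skip n m r : (m <= n)%N -> Uterm n.+1 m r = uvar * Uterm n m r.
Proof. by move=> mn; rewrite /Uterm subSn // exprS mulrA. Qed.

Section Recursion.
Variables (E : {fset nat}) (F : {fset {fset elt}}) (i : nat).
Hypotheses (dmF : is_delta_matroid E F) (iE : i \in E).

Lemma Upoly_split : Upoly E F = \sum_(S <- AdS (E `\ i))
  (Uterm #|` E `\ i|.+1 #|` S|.+1 (rankD F ((i, false) |` S)) +
   Uterm #|` E `\ i|.+1 #|` S|.+1 (rankD F ((i, true) |` S)) +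
   uvar * Uterm #|` E `\ i| #|` S| (rankD (minor_mid F i) S)).
Proof.
rewrite UpolyE (AdS_split _ iE) (cardfsD1 i E) iE; apply: eq_big_seq => S.
rewrite inAdS => SA; have /admP[SE _] := SA.
rewrite !cardfsU1 !(notin_groundD1 _ SE) !add1n.
by rewrite (Uterm_skip _ (card_adm_le SA)) (rankD_mid dmF SE).
Qed.

Lemma Upoly_nonloop : ~~ is_loop F i -> ~~ is_coloop F i ->
  Upoly E F = Upoly (E `\ i) (contract F i) + Upoly (E `\ i) (delete F i)
              + uvar * Upoly (E `\ i) (minor_mid F i).
Proof.
move=> nloop ncoloop.
have [B1 B1F iB1] : exists2 B, B \in F & (i, false) \in B.
  by move: nloop; rewrite negb_forall => /existsP[[B BF] /negPn iB]; exists B.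
have [B2 B2F iB2] : exists2 B, B \in F & (i, true) \in B.
  move: ncoloop; rewrite negb_forall => /existsP[[B BF] /= iNB]; exists B => //.
  by rewrite -[true]/(~~ false) (feas_memN dmF _ BF iE).
rewrite /contract /delete (negbTE nloop) (negbTE ncoloop) Upoly_split !UpolyE.
rewrite mulr_sumr -!big_split /=; apply: eq_big_seq => S; rewrite inAdS => /admP[SE _].
rewrite !(rankD_nonloop dmF iE) //; [|by exists B2|by exists B1].
by rewrite !Uterm_succ.
Qed.

Lemma Upoly_loop_coloop : is_loop F i || is_coloop F i ->
  Upoly E F = (uvar + vvar + 1) * Upoly (E `\ i) (delete F i).
Proof.
move=> fixed; have [t iF] : exists t, forall B, B \in F -> (i, t) \in B.
  case/orP: fixed => /forallP iF; [exists true|exists false] => B BF; last exact: iF [` BF].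
  by rewrite -[true]/(~~ false) (feas_memN dmF _ BF iE) (negbTE (iF [` BF])).
rewrite /delete fixed Upoly_split UpolyE mulr_sumr; apply: eq_big_seq => S.
rewrite inAdS => /admP[SE _]; rewrite !(rankD_fixed dmF iE _ SE iF).
have := rankD_le_card (minor_mid F i) SE.
case: t {iF} => /= rm; rewrite ?expr1 ?expr0 Uterm_succ_neg // Uterm_succ; ring.
Qed.

End Recursion.

Lemma Upoly_fset0 F : Upoly fset0 F = 1.
Proof.
have r0 : rankD F fset0 = 0.
  apply/le_anti; rewrite (rankD_le_card F (fsub0set (ground fset0))) /=.
  exact: bigmax_ge_id.
by rewrite UpolyE AdS_fset0 big_seq_fset1 r0 /Uterm !cardfs0 subr0 expr0 mul1r.
Qed.

Theorem proposition3p1 (E : {fset nat}) (F : {fset {fset elt}}) :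
  (0%N \notin E) ->
  is_delta_matroid E F ->
  (E = fset0 -> Upoly E F = 1) /\
  (forall i : nat, i \in E ->
     (~~ is_loop F i -> ~~ is_coloop F i ->
        Upoly E F = Upoly (E `\ i) (contract F i) + Upoly (E `\ i) (delete F i)
                    + uvar * Upoly (E `\ i) (minor_mid F i)) /\
     (is_loop F i || is_coloop F i ->
        Upoly E F = (uvar + vvar + 1) * Upoly (E `\ i) (delete F i))).
Proof.
move=> _ dmF; split=> [->|i iE]; first exact: Upoly_fset0.
by split; [exact: Upoly_nonloop | exact: Upoly_loop_coloop].
Qed.
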